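(* Let $\omega_c>0$. For $\nu>0$, $k\in\mathbb Z^3$ and $t\ge0$ define $$S(t,k)=\exp\Big[-\nu\int_0^t|k_3|^2\Big(\frac{1-e^{-\nu(t-s)}}{\nu}\Big)^2ds\Big]\exp\Big[-\frac{\nu|k_\perp|^2}{\nu^2+\omega_c^2}\int_0^t\Big(\big[1-\cos\omega_c(t-s)\,e^{-\nu(t-s)}\big]^2+e^{-2\nu(t-s)}\sin^2\omega_c(t-s)\Big)ds\Big].$$ Then there exist $\nu_1>0$ and $\delta_0>0$ such that for all $\nu\in(0,\nu_1)$ and all $k$ with $k_3\neq0$, the function $t\mapsto S(t,k)$ is strictly decreasing on $[0,\infty)$ and for all $t\ge0$ $$0<S(t,k)\le\exp\big(-\delta_0\min(\nu k_3^2t^3,\nu^{-1}k_3^2t)\big)\exp\big(-\delta_0\nu|k_\perp|^2\min(t^3,t)\big).$$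
   Context: $k_\perp=(k_1,k_2,0)$, $|k_\perp|^2=k_1^2+k_2^2$. $S$ is the collisional damping factor along the characteristics of the Fourier-transformed linearized Vlasov–Fokker–Planck equation in a uniform magnetic field with cyclotron frequency $\omega_c$ and collision frequency $\nu$. *)

From Stdlib Require Import Reals ZArith.
From Coquelicot Require Import Coquelicot.
Open Scope R_scope.

Definition integrand1 (nu : R) (k3 : Z) (t s : R) : R :=
  (IZR k3) ^ 2 * ((1 - exp (- nu * (t - s))) / nu) ^ 2.

Definition integrand2 (nu wc : R) (t s : R) : R :=
  (1 - cos (wc * (t - s)) * exp (- nu * (t - s))) ^ 2
  + exp (-2 * nu * (t - s)) * (sin (wc * (t - s))) ^ 2.

Definition kperp2 (k1 k2 : Z) : R := (IZR k1) ^ 2 + (IZR k2) ^ 2.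

Definition S (nu wc : R) (k1 k2 k3 : Z) (t : R) : R :=
  exp (- nu * RInt (integrand1 nu k3 t) 0 t)
  * exp (- (nu * kperp2 k1 k2 / (nu ^ 2 + wc ^ 2))
           * RInt (integrand2 nu wc t) 0 t).

From Stdlib Require Import Reals ZArith Lra Psatz.
From Coquelicot Require Import Coquelicot.
Open Scope R_scope.

(* Substituting u = t - s writes S(t) = exp (- nu A(t) - c B(t)) with c >= 0, where
   A and B integrate over [0, t] the kernels
     F(u) = k3^2 ((1 - e^{-nu u}) / nu)^2,
     G(u) = (1 - e^{-nu u})^2 + 2 e^{-nu u} (1 - cos (wc u)).
   Both are nonnegative and F > 0 for u > 0 when k3 <> 0, so S decreases strictly.
   F is nondecreasing, hence A(t) >= (t/2) F(t/2), and 1 - e^{-x} >= min(x, 1)/2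
   gives the two regimes nu k3^2 t^3 and k3^2 t / nu.  For G: if nu t <= 1 then
   e^{-nu u} >= 1/3 and the gyration term integrates to (2/3)(t - sin (wc t)/wc),
   which is of order min(t^3, t) because x - sin x >= (2/15) min(x^3, x); if nu t >= 1
   the collisional term is >= 1/16 on [t/2, t].  Any nu1 <= 1 then works, with
   delta0 = min(wc^2, 1) / (32 (1 + wc^2)). *)

Lemma exp_le_compat x y : x <= y -> exp x <= exp y.
Proof.
  intros [Hlt | ->]; [now left; apply exp_increasing | apply Rle_refl].
Qed.

Lemma one_sub_exp_neg_lb x : 0 <= x -> Rmin x 1 / 2 <= 1 - exp (- x).
Proof.
  intros Hx.
  assert (Hinv : exp (- x) * exp x = 1) by (rewrite <- exp_plus, Rplus_opp_l; apply exp_0).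
  assert (Hx1 : exp (- x) * (1 + x) <= 1).
  { rewrite <- Hinv at 2.
    apply Rmult_le_compat_l; [left; apply exp_pos | apply exp_ineq1_le]. }
  pose proof (exp_pos (- x)).
  destruct (Rle_dec x 1) as [Hle | Hgt].
  - rewrite Rmin_left by lra. nra.
  - rewrite Rmin_right by lra. nra.
Qed.

Lemma sin_defect_lb x : 0 <= x -> 2 / 15 * Rmin (x ^ 3) x <= x - sin x.
Proof.
  intros Hx. destruct (Rle_dec x 2) as [Hle | Hgt].
  - destruct (pre_sin_bound x 0 Hx ltac:(lra)) as [_ Hsin].
    unfold sin_approx, sin_term in Hsin; simpl in Hsin.
    assert (Hmin : Rmin (x ^ 3) x <= x ^ 3) by apply Rmin_l.
    assert (0 <= x ^ 3 * (4 - x ^ 2)) by (apply Rmult_le_pos; nra).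
    nra.
  - pose proof (SIN_bound x). assert (Rmin (x ^ 3) x <= x) by apply Rmin_r. lra.
Qed.

Lemma ex_RInt_continuous_everywhere (f : R -> R) a b :
  (forall x, continuous f x) -> ex_RInt f a b.
Proof. intros Hf. apply (@ex_RInt_continuous R_CompleteNormedModule); auto. Qed.

Lemma RInt_reflect (f : R -> R) t : (forall x, continuous f x) ->
  RInt (fun s => f (t - s)) 0 t = RInt f 0 t.
Proof.
  intros Hf.
  assert (Hlin := RInt_comp_lin f (-1) t 0 t (ex_RInt_continuous_everywhere f _ _ Hf)).
  replace (-1 * 0 + t) with t in Hlin by ring.
  replace (-1 * t + t) with 0 in Hlin by ring.
  rewrite <- (opp_RInt_swap f 0 t (ex_RInt_continuous_everywhere f _ _ Hf)) in Hlin.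
  rewrite <- (RInt_ext (fun s => opp (f (t - s)))) in Hlin.
  2: { intros x _. unfold scal, opp; simpl; unfold mult; simpl.
       replace (-1 * x + t) with (t - x) by ring. ring. }
  rewrite (RInt_opp (V := R_CompleteNormedModule)) in Hlin.
  - unfold opp in Hlin; simpl in Hlin. lra.
  - apply ex_RInt_continuous_everywhere. intros x.
    apply (continuous_comp (fun s => t - s) f); [| apply Hf].
    apply (@ex_derive_continuous R_AbsRing R_NormedModule). auto_derive. auto.
Qed.

Lemma RInt_tail_lb (f : R -> R) a m b c : a <= m <= b ->
  ex_RInt f a m -> ex_RInt f m b ->
  (forall x, a <= x <= m -> 0 <= f x) -> (forall x, m <= x <= b -> c <= f x) ->
  (b - m) * c <= RInt f a b.
Proof.
  intros Hm Hint_am Hint_mb Hpos Hc.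
  rewrite <- (RInt_Chasles f a m b Hint_am Hint_mb); simpl; unfold plus; simpl.
  assert (0 <= RInt f a m) by (apply RInt_ge_0; [lra | auto | intros; apply Hpos; lra]).
  assert ((b - m) * c <= RInt f m b).
  { replace ((b - m) * c) with (RInt (fun _ => c) m b) by (rewrite RInt_const; reflexivity).
    apply RInt_le; auto; [lra | apply ex_RInt_const | intros; apply Hc; lra]. }
  lra.
Qed.

Section Upper_limit.

Variables (f : R -> R) (a s t : R).
Hypothesis Hf : forall x, continuous f x.

Let RInt_split : RInt f a t = RInt f a s + RInt f s t.
Proof.
  rewrite <- (RInt_Chasles f a s t); try apply ex_RInt_continuous_everywhere; auto.
Qed.

Lemma RInt_le_upper : s <= t -> (forall x, s < x < t -> 0 <= f x) -> RInt f a s <= RInt f a t.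
Proof.
  intros Hst Hpos. rewrite RInt_split.
  assert (0 <= RInt f s t) by (apply RInt_ge_0; auto; apply ex_RInt_continuous_everywhere, Hf).
  lra.
Qed.

Lemma RInt_lt_upper : s < t -> (forall x, s < x < t -> 0 < f x) -> RInt f a s < RInt f a t.
Proof.
  intros Hlt Hpos. rewrite RInt_split.
  assert (0 < RInt f s t).
  { apply Rle_lt_trans with (RInt (fun _ => 0) s t).
    - rewrite RInt_const. unfold scal; simpl; unfold mult; simpl. lra.
    - apply RInt_lt; auto. intros. apply continuous_const. }
  lra.
Qed.

End Upper_limit.

Lemma RInt_one_sub_cos w t : w <> 0 ->
  RInt (fun u => 1 - cos (w * u)) 0 t = t - sin (w * t) / w.
Proof.
  intros Hw. apply is_RInt_unique.
  replace (t - sin (w * t) / w) with (minus (t - sin (w * t) / w) (0 - sin (w * 0) / w))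
    by (unfold minus, plus, opp; simpl; rewrite Rmult_0_r, sin_0; field; auto).
  apply (is_RInt_derive (fun u => u - sin (w * u) / w)).
  - intros x _. auto_derive; [auto | field; auto].
  - intros x _. apply (@ex_derive_continuous R_AbsRing R_NormedModule). auto_derive. auto.
Qed.

Definition par_kernel (nu : R) (k3 : Z) (u : R) : R :=
  IZR k3 ^ 2 * ((1 - exp (- nu * u)) / nu) ^ 2.

Definition perp_kernel (nu wc u : R) : R :=
  (1 - cos (wc * u) * exp (- nu * u)) ^ 2 + exp (-2 * nu * u) * sin (wc * u) ^ 2.

Lemma par_kernel_continuous nu k3 x : nu <> 0 -> continuous (par_kernel nu k3) x.
Proof.
  intros Hnu. apply (@ex_derive_continuous R_AbsRing R_NormedModule).
  unfold par_kernel. auto_derive. auto.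
Qed.

Lemma perp_kernel_continuous nu wc x : continuous (perp_kernel nu wc) x.
Proof.
  apply (@ex_derive_continuous R_AbsRing R_NormedModule).
  unfold perp_kernel. auto_derive. auto.
Qed.

Lemma S_eq_RInt_kernels nu wc k1 k2 k3 t : nu <> 0 ->
  S nu wc k1 k2 k3 t =
  exp (- nu * RInt (par_kernel nu k3) 0 t)
  * exp (- (nu * kperp2 k1 k2 / (nu ^ 2 + wc ^ 2)) * RInt (perp_kernel nu wc) 0 t).
Proof.
  intros Hnu. unfold S.
  change (integrand1 nu k3 t) with (fun s => par_kernel nu k3 (t - s)).
  change (integrand2 nu wc t) with (fun s => perp_kernel nu wc (t - s)).
  rewrite !RInt_reflect; auto using par_kernel_continuous, perp_kernel_continuous.
Qed.

Lemma par_kernel_nonneg nu k3 u : 0 <= par_kernel nu k3 u.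
Proof. apply Rmult_le_pos; apply pow2_ge_0. Qed.

Lemma par_kernel_pos nu k3 u : 0 < nu -> k3 <> 0%Z -> 0 < u -> 0 < par_kernel nu k3 u.
Proof.
  intros Hnu Hk3 Hu.
  assert (exp (- nu * u) < 1) by (rewrite <- exp_0; apply exp_increasing; nra).
  apply Rmult_lt_0_compat.
  - apply pow2_gt_0, not_0_IZR, Hk3.
  - apply pow2_gt_0. apply Rgt_not_eq, Rdiv_lt_0_compat; lra.
Qed.

Lemma par_kernel_le nu k3 u v : 0 < nu -> 0 <= u <= v -> par_kernel nu k3 u <= par_kernel nu k3 v.
Proof.
  intros Hnu Huv. unfold par_kernel.
  assert (exp (- nu * v) <= exp (- nu * u)) by (apply exp_le_compat; nra).
  assert (exp (- nu * u) <= 1) by (rewrite <- exp_0; apply exp_le_compat; nra).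
  apply Rmult_le_compat_l; [apply pow2_ge_0 |].
  apply pow_incr. split; unfold Rdiv.
  - apply Rmult_le_pos; [lra | left; apply Rinv_0_lt_compat, Hnu].
  - apply Rmult_le_compat_r; [left; apply Rinv_0_lt_compat, Hnu | lra].
Qed.

Lemma perp_kernel_eq nu wc u : perp_kernel nu wc u =
  (1 - exp (- nu * u)) ^ 2 + 2 * exp (- nu * u) * (1 - cos (wc * u)).
Proof.
  unfold perp_kernel. replace (-2 * nu * u) with (- nu * u + - nu * u) by ring.
  rewrite exp_plus. pose proof (sin2_cos2 (wc * u)) as Hpyth. unfold Rsqr in Hpyth.
  nra.
Qed.

Lemma perp_kernel_ge_collisional nu wc u : (1 - exp (- nu * u)) ^ 2 <= perp_kernel nu wc u.
Proof.
  rewrite perp_kernel_eq. pose proof (exp_pos (- nu * u)). pose proof (COS_bound (wc * u)).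
  nra.
Qed.

Lemma perp_kernel_ge_gyration nu wc u :
  2 * exp (- nu * u) * (1 - cos (wc * u)) <= perp_kernel nu wc u.
Proof. rewrite perp_kernel_eq. pose proof (pow2_ge_0 (1 - exp (- nu * u))). lra. Qed.

Lemma perp_kernel_nonneg nu wc u : 0 <= perp_kernel nu wc u.
Proof. eapply Rle_trans; [apply pow2_ge_0 | apply perp_kernel_ge_collisional]. Qed.

Lemma par_integral_lb nu k3 t : 0 < nu -> 0 <= t ->
  Rmin (nu * IZR k3 ^ 2 * t ^ 3) (IZR k3 ^ 2 * t / nu) / 32
  <= nu * RInt (par_kernel nu k3) 0 t.
Proof.
  intros Hnu Ht.
  assert (Hcont : forall x, continuous (par_kernel nu k3) x)
    by (intros; apply par_kernel_continuous; lra).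
  assert (Htail : (t - t / 2) * par_kernel nu k3 (t / 2) <= RInt (par_kernel nu k3) 0 t).
  { apply RInt_tail_lb; try apply ex_RInt_continuous_everywhere, Hcont.
    - lra.
    - intros x _. apply par_kernel_nonneg.
    - intros x Hx. apply par_kernel_le; lra. }
  apply Rmult_le_compat_l with (r := nu) in Htail; [| lra].
  eapply Rle_trans; [| exact Htail].
  set (a := IZR k3 ^ 2 * t / nu).
  set (y := 1 - exp (- nu * (t / 2))).
  assert (Ha : 0 <= a) by (apply Rdiv_le_0_compat; [apply Rmult_le_pos; [apply pow2_ge_0 |] |]; lra).
  assert (Hy : Rmin (nu * t / 2) 1 / 2 <= y).
  { unfold y. replace (- nu * (t / 2)) with (- (nu * t / 2)) by field.
    apply one_sub_exp_neg_lb. nra. }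
  replace (nu * IZR k3 ^ 2 * t ^ 3) with (a * (nu * t) ^ 2) by (unfold a; field; lra).
  replace (nu * ((t - t / 2) * par_kernel nu k3 (t / 2))) with (a * y ^ 2 / 2)
    by (unfold a, y, par_kernel; field; lra).
  assert (Hnut : 0 <= nu * t) by nra.
  destruct (Rle_dec (nu * t / 2) 1) as [Hle | Hgt].
  - rewrite Rmin_left in Hy by lra.
    assert (Hmin : Rmin (a * (nu * t) ^ 2) a <= a * (nu * t) ^ 2) by apply Rmin_l.
    assert ((nu * t) ^ 2 <= 16 * y ^ 2) by nra.
    assert (a * (nu * t) ^ 2 <= a * (16 * y ^ 2)) by (apply Rmult_le_compat_l; lra).
    lra.
  - rewrite Rmin_right in Hy by lra.
    assert (Hmin : Rmin (a * (nu * t) ^ 2) a <= a) by apply Rmin_r.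
    assert (a * (1 / 4) <= a * y ^ 2) by (apply Rmult_le_compat_l; nra).
    lra.
Qed.

Lemma perp_integral_lb_short nu wc t : 0 <= nu -> wc <> 0 -> 0 <= t -> nu * t <= 1 ->
  2 / 3 * (t - sin (wc * t) / wc) <= RInt (perp_kernel nu wc) 0 t.
Proof.
  intros Hnu Hwc Ht Hnut.
  assert (Hcos_int : ex_RInt (fun u => 1 - cos (wc * u)) 0 t).
  { apply ex_RInt_continuous_everywhere. intros x.
    apply (@ex_derive_continuous R_AbsRing R_NormedModule). auto_derive. auto. }
  rewrite <- RInt_one_sub_cos by exact Hwc.
  replace (2 / 3 * RInt (fun u => 1 - cos (wc * u)) 0 t)
    with (RInt (fun u => 2 / 3 * (1 - cos (wc * u))) 0 t)
    by exact (RInt_scal (V := R_CompleteNormedModule) _ 0 t (2 / 3) Hcos_int).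
  apply RInt_le; [lra | | apply ex_RInt_continuous_everywhere, perp_kernel_continuous |].
  - apply (ex_RInt_scal (V := R_CompleteNormedModule)), Hcos_int.
  - intros u Hu.
    assert (Hexp : 1 / 3 <= exp (- nu * u)).
    { assert (exp (nu * u) <= 3)
        by (pose proof exp_le_3; pose proof (exp_le_compat (nu * u) 1 ltac:(nra)); lra).
      replace (- nu * u) with (- (nu * u)) by ring. rewrite exp_Ropp.
      replace (1 / 3) with (/ 3) by field.
      apply Rinv_le_contravar; [apply exp_pos | assumption]. }
    pose proof (COS_bound (wc * u)).
    pose proof (perp_kernel_ge_gyration nu wc u).
    nra.
Qed.

Lemma perp_integral_lb_long nu wc t : 0 <= t -> 1 <= nu * t ->
  t / 32 <= RInt (perp_kernel nu wc) 0 t.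
Proof.
  intros Ht Hnut.
  replace (t / 32) with ((t - t / 2) * (1 / 16)) by field.
  apply RInt_tail_lb; try apply ex_RInt_continuous_everywhere, perp_kernel_continuous.
  - lra.
  - intros x _. apply perp_kernel_nonneg.
  - intros x Hx. eapply Rle_trans; [| apply perp_kernel_ge_collisional].
    assert (Hnu : 0 < nu) by (destruct (Rle_dec nu 0); nra).
    assert (Hnux : 1 / 2 <= nu * x) by nra.
    assert (Hy := one_sub_exp_neg_lb (nu * x) ltac:(lra)).
    assert (1 / 2 <= Rmin (nu * x) 1) by (apply Rmin_glb; lra).
    replace (1 / 16) with ((1 / 4) ^ 2) by field.
    replace (- nu * x) with (- (nu * x)) by ring.
    apply pow_incr. lra.
Qed.

Lemma perp_integral_lb nu wc t : 0 <= nu -> 0 < wc -> 0 <= t ->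
  Rmin (wc ^ 2) 1 / 32 * Rmin (t ^ 3) t <= RInt (perp_kernel nu wc) 0 t.
Proof.
  intros Hnu Hwc Ht.
  set (M := Rmin (wc ^ 2) 1). set (m := Rmin (t ^ 3) t).
  assert (HM1 : M <= wc ^ 2) by apply Rmin_l. assert (HM2 : M <= 1) by apply Rmin_r.
  assert (HM0 : 0 <= M) by (apply Rmin_glb; nra).
  assert (Hm1 : m <= t ^ 3) by apply Rmin_l. assert (Hm2 : m <= t) by apply Rmin_r.
  assert (Hm0 : 0 <= m) by (apply Rmin_glb; [apply pow_le |]; lra).
  destruct (Rle_dec (nu * t) 1) as [Hshort | Hlong].
  - eapply Rle_trans; [| apply perp_integral_lb_short; lra].
    assert (Hsin := sin_defect_lb (wc * t) ltac:(nra)).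
    assert (Hmin : wc * (M * m) <= Rmin ((wc * t) ^ 3) (wc * t)).
    { apply Rmin_glb.
      - assert (M * m <= wc ^ 2 * t ^ 3) by (apply Rmult_le_compat; lra). nra.
      - assert (M * m <= 1 * t) by (apply Rmult_le_compat; lra). nra. }
    replace (2 / 3 * (t - sin (wc * t) / wc)) with (2 / (3 * wc) * (wc * t - sin (wc * t)))
      by (field; lra).
    assert (2 / (3 * wc) * (2 / 15 * (wc * (M * m)))
            <= 2 / (3 * wc) * (wc * t - sin (wc * t))) as Hscaled.
    { apply Rmult_le_compat_l; [apply Rlt_le, Rdiv_lt_0_compat |]; lra. }
    replace (2 / (3 * wc) * (2 / 15 * (wc * (M * m)))) with (4 / 45 * (M * m)) in Hscaled
      by (field; lra).
    nra.
  - eapply Rle_trans; [| apply perp_integral_lb_long; lra].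
    assert (M * m <= 1 * t) by (apply Rmult_le_compat; lra).
    lra.
Qed.

Lemma S_strictly_decreasing nu wc k1 k2 k3 s t : 0 < nu -> k3 <> 0%Z -> 0 <= s -> s < t ->
  S nu wc k1 k2 k3 t < S nu wc k1 k2 k3 s.
Proof.
  intros Hnu Hk3 Hs Hst.
  rewrite !S_eq_RInt_kernels by lra.
  set (c := nu * kperp2 k1 k2 / (nu ^ 2 + wc ^ 2)).
  assert (Hc : 0 <= c).
  { apply Rdiv_le_0_compat; [apply Rmult_le_pos; [lra | unfold kperp2] |]; nra. }
  assert (Hpar : RInt (par_kernel nu k3) 0 s < RInt (par_kernel nu k3) 0 t).
  { apply RInt_lt_upper; try lra.
    - intros x. apply par_kernel_continuous. lra.
    - intros x Hx. apply par_kernel_pos; auto; lra. }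
  assert (Hperp : RInt (perp_kernel nu wc) 0 s <= RInt (perp_kernel nu wc) 0 t).
  { apply RInt_le_upper; [apply perp_kernel_continuous | lra |].
    intros. apply perp_kernel_nonneg. }
  rewrite <- !exp_plus. apply exp_increasing. nra.
Qed.

Definition damping_rate (wc : R) : R := Rmin (wc ^ 2) 1 / (32 * (1 + wc ^ 2)).

Lemma damping_rate_pos wc : 0 < wc -> 0 < damping_rate wc.
Proof.
  intros Hwc. apply Rdiv_lt_0_compat; [apply Rmin_glb_lt |]; nra.
Qed.

Lemma damping_rate_le wc : damping_rate wc <= 1 / 32.
Proof.
  assert (Rmin (wc ^ 2) 1 <= 1) by apply Rmin_r.
  unfold damping_rate. apply Rmult_le_reg_r with (32 * (1 + wc ^ 2)); [nra |].
  field_simplify; nra.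
Qed.

Lemma damping_rate_mul_le wc nu : nu ^ 2 <= 1 ->
  damping_rate wc * (nu ^ 2 + wc ^ 2) <= Rmin (wc ^ 2) 1 / 32.
Proof.
  intros Hnu. assert (0 <= Rmin (wc ^ 2) 1) by (apply Rmin_glb; nra).
  unfold damping_rate.
  replace (Rmin (wc ^ 2) 1 / (32 * (1 + wc ^ 2)) * (nu ^ 2 + wc ^ 2))
    with (Rmin (wc ^ 2) 1 / 32 * ((nu ^ 2 + wc ^ 2) / (1 + wc ^ 2))) by (field; nra).
  rewrite <- (Rmult_1_r (Rmin (wc ^ 2) 1 / 32)) at 2.
  apply Rmult_le_compat_l; [lra |].
  apply Rmult_le_reg_r with (1 + wc ^ 2); [nra |]. field_simplify; nra.
Qed.

Lemma S_le_damping_bound nu wc k1 k2 k3 t : 0 < wc -> 0 < nu < 1 -> 0 <= t ->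
  S nu wc k1 k2 k3 t <=
  exp (- damping_rate wc * Rmin (nu * IZR k3 ^ 2 * t ^ 3) (IZR k3 ^ 2 * t / nu))
  * exp (- damping_rate wc * nu * kperp2 k1 k2 * Rmin (t ^ 3) t).
Proof.
  intros Hwc Hnu Ht.
  rewrite S_eq_RInt_kernels by lra.
  assert (Hd := damping_rate_le wc).
  assert (Hdmul := damping_rate_mul_le wc nu ltac:(nra)).
  set (d := damping_rate wc) in *.
  set (m1 := Rmin (nu * IZR k3 ^ 2 * t ^ 3) (IZR k3 ^ 2 * t / nu)).
  set (m2 := Rmin (t ^ 3) t).
  assert (Hm1 : 0 <= m1).
  { assert (0 <= t ^ 3) by (apply pow_le; lra).
    pose proof (pow2_ge_0 (IZR k3)).
    apply Rmin_glb; [apply Rmult_le_pos; [apply Rmult_le_pos |] | apply Rdiv_le_0_compat];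
      nra. }
  assert (Hm2 : 0 <= m2) by (apply Rmin_glb; [apply pow_le |]; lra).
  assert (Hkperp : 0 <= kperp2 k1 k2) by (unfold kperp2; nra).
  assert (Hpar := par_integral_lb nu k3 t ltac:(lra) Ht).
  assert (Hperp := perp_integral_lb nu wc t ltac:(lra) Hwc Ht).
  apply Rmult_le_compat; try (left; apply exp_pos); apply exp_le_compat.
  - fold m1 in Hpar. nra.
  - set (c := nu * kperp2 k1 k2 / (nu ^ 2 + wc ^ 2)).
    assert (Hc : 0 <= c) by (apply Rdiv_le_0_compat; nra).
    replace (- d * nu * kperp2 k1 k2 * m2) with (- (c * (d * (nu ^ 2 + wc ^ 2) * m2)))
      by (unfold c; field; nra).
    fold m2 in Hperp.
    assert (d * (nu ^ 2 + wc ^ 2) * m2 <= Rmin (wc ^ 2) 1 / 32 * m2)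
      by (apply Rmult_le_compat_r; lra).
    assert (c * (d * (nu ^ 2 + wc ^ 2) * m2) <= c * RInt (perp_kernel nu wc) 0 t)
      by (apply Rmult_le_compat_l; lra).
    lra.
Qed.

Theorem mainTheorem7 (wc : R) (hwc : 0 < wc) :
  exists nu1 delta0 : R, 0 < nu1 /\ 0 < delta0 /\
    forall (nu : R), 0 < nu < nu1 ->
    forall (k1 k2 k3 : Z), k3 <> 0%Z ->
      (forall s t : R, 0 <= s -> s < t -> S nu wc k1 k2 k3 t < S nu wc k1 k2 k3 s) /\
      (forall t : R, 0 <= t ->
         0 < S nu wc k1 k2 k3 t /\
         S nu wc k1 k2 k3 t <=
           exp (- delta0 * Rmin (nu * (IZR k3) ^ 2 * t ^ 3) ((IZR k3) ^ 2 * t / nu))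
           * exp (- delta0 * nu * kperp2 k1 k2 * Rmin (t ^ 3) t)).
Proof.
  exists 1, (damping_rate wc).
  split; [lra | split; [now apply damping_rate_pos |]].
  intros nu Hnu k1 k2 k3 Hk3. split.
  - intros s t Hs Hst. apply S_strictly_decreasing; auto; lra.
  - intros t Ht. split.
    + apply Rmult_lt_0_compat; apply exp_pos.
    + now apply S_le_damping_bound.
Qed.
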